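(* Let $K$ be a number field, let $\alpha,\beta$ be multiplicatively independent positive rational numbers, and let $N$ be a natural number. Let $F\in K[[x^{\mathbb{R}}]]$ be a Hahn series satisfying nontrivial homogeneous equations $\sum_{i=0}^{d_1}P_i(x)F(x^{\alpha^i})=0$ and $\sum_{i=0}^{d_2}Q_i(x)F(x^{\beta^i})=0$ with $P_i,Q_i\in K[x]$, $P_{d_1}\ne0$, $Q_{d_2}\ne0$. Then there is a positive integer $l$ such that $G(x)=F(x^l)$ satisfies $$P(G)\subseteq\bigcap_{|n|,|m|\le N}\mathbb{Z}\big[\alpha^n\beta^m,(\alpha^n\beta^m)^{-1}\big],$$ the intersection being over all integers $n,m$ with $|n|\le N$, $|m|\le N$.
   Context: $K[[x^{\mathbb{R}}]]$ is the field of Hahn series $\sum_{i\in\mathbb{R}} f_ix^i$ ($f_i\in K$) with well-ordered support $P(F)=\{i:f_i\ne0\}$; $F(x^\gamma)=\sum_if_ix^{\gamma i}$. For a positive rational $\gamma$, $\mathbb{Z}[\gamma,\gamma^{-1}]$ is the subring of $\mathbb{Q}$ generated by $\gamma$ and $\gamma^{-1}$. Positive reals $\alpha,\beta$ are multiplicatively independent if $\log\alpha/\log\beta\notin\mathbb{Q}$. *)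

From HB Require Import structures.
From mathcomp Require Import all_boot all_order all_algebra all_field.
From mathcomp Require Import all_classical all_reals all_analysis.
Set Implicit Arguments. Unset Strict Implicit. Unset Printing Implicit Defensive.
Import Order.TTheory GRing.Theory Num.Theory.
Local Open Scope ring_scope.
Local Open Scope classical_set_scope.

(* A Hahn series in K[[x^R]] is represented by its coefficient function
   f : R -> K (f i = coefficient of x^i) together with the condition that
   its support is well-ordered. *)
Definition hahn_support (R : realType) (K : fieldType) (f : R -> K) : set R :=
  [set i | f i != 0].

Definition well_ordered_set (R : realType) (S : set R) : Prop :=
  forall A : set R, A `<=` S -> A !=set0 ->
    exists2 a, A a & forall b, A b -> a <= b.

Definition is_hahn (R : realType) (K : fieldType) (f : R -> K) : Prop :=
  well_ordered_set (hahn_support f).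

(* F(x^g) = sum_i f_i x^(g i): its coefficient at j is f (j / g) (g > 0). *)
Definition hahn_subst (R : realType) (K : fieldType) (f : R -> K) (g : R) : R -> K :=
  fun j => f (j / g).

Definition hahn_polymul (R : realType) (K : fieldType) (p : {poly K}) (f : R -> K) : R -> K :=
  fun j => \sum_(k < size p) p`_k * f (j - k%:R).

Definition mahler_eq (R : realType) (K : fieldType) (P : nat -> {poly K}) (d : nat)
  (g : R) (f : R -> K) : Prop :=
  forall j : R, \sum_(i < d.+1) hahn_polymul (P i) (hahn_subst f (g ^+ i)) j = 0.

Definition mult_indep (R : realType) (a b : R) : Prop :=
  ~ exists q : rat, ln a / ln b = ratr q.

(* q belongs to Z[g, g^-1], the subring of Q generated by g and g^-1
   (integer Laurent polynomials in g). *)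
Definition in_Zlaurent (g q : rat) : Prop :=
  exists s : seq (int * int), q = \sum_(p <- s) (p.1)%:~R * g ^ p.2.

(* Write [F_(a,b)(x) = F(x^(al^a be^b))]. The two Mahler equations put every [F_(a,b)],
   [a, b] bounded, in the [K(x^h)]-span of the [d1 d2] series [F_(a,b)], [a < d1],
   [b < d2], for a suitable [h = 1/D]. Hence, for each ratio
   [g = al^n be^m / (al^n' be^m') != 1], [F] satisfies a relation
   [\sum_k c_k(x^h) F(x^(B g^k)) = 0]. Comparing lowest exponents along the classes of
   [s ~ g^z s + y], [y] in [E^-1 Z[g, g^-1]], shows that the support of [F] lies in
   [E^-1 Z[g, g^-1]] for some [E]. For [g = al] this leaves only the primes of [al] in the
   denominators; for each such prime [p], multiplicative independence provides a ratio
   [g != 1] whose numerator and denominator are prime to [p]. *)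

From HB Require Import structures.
From mathcomp Require Import all_boot all_order all_algebra all_field.
From mathcomp Require Import all_classical all_reals all_analysis.
From mathcomp Require Import ring zify.
Import Order.TTheory GRing.Theory Num.Theory.
Set Implicit Arguments. Unset Strict Implicit. Unset Printing Implicit Defensive.
Local Open Scope ring_scope.

Section StepMultiplication.
Variables (R : realType) (K : fieldType).
Implicit Types (p q : {poly K}) (c : K) (h j : R) (f g : R -> K).

(* The coefficient at [j] of [p(x^h) * f]. *)
Definition hmul p h f j : K := \sum_(k < size p) p`_k * f (j - k%:R * h).

Lemma hmul_widen n p h f j : (size p <= n)%N ->
  hmul p h f j = \sum_(k < n) p`_k * f (j - k%:R * h).
Proof.
move=> le_p_n; rewrite /hmul (big_ord_widen n (fun k => p`_k * f (j - k%:R * h))) //.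
rewrite big_mkcond; apply: eq_bigr => i _; case: ltnP => // le_p_i.
by rewrite nth_default // mul0r.
Qed.

Lemma eq_hmul p h f g : f =1 g -> hmul p h f =1 hmul p h g.
Proof. by move=> eq_fg j; apply: eq_bigr => i _; rewrite eq_fg. Qed.

Lemma hmul0 h f j : hmul 0 h f j = 0.
Proof. by rewrite /hmul size_poly0 big_ord0. Qed.

Lemma hmulD p q h f j : hmul (p + q) h f j = hmul p h f j + hmul q h f j.
Proof.
rewrite !(@hmul_widen (maxn (size p) (size q))) ?leq_maxl ?leq_maxr ?size_polyD //.
by rewrite -big_split; apply: eq_bigr => i _; rewrite coefD mulrDl.
Qed.

Lemma hmul_sum (I : Type) (r : seq I) (P : I -> {poly K}) h f j :
  hmul (\sum_(i <- r) P i) h f j = \sum_(i <- r) hmul (P i) h f j.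
Proof.
exact: (big_morph (fun p => hmul p h f j) (fun p q => hmulD p q h f j) (hmul0 h f j)).
Qed.

Lemma hmulC c h f j : hmul c%:P h f j = c * f j.
Proof. by rewrite (@hmul_widen 1) ?size_polyC ?leq_b1 // big_ord1 coefC mul0r subr0. Qed.

Lemma hmul1 h f j : hmul 1 h f j = f j.
Proof. by rewrite hmulC mul1r. Qed.

Lemma hmulCM c p h f j : hmul (c%:P * p) h f j = c * hmul p h f j.
Proof.
rewrite !(@hmul_widen (size p)) //; last by rewrite mul_polyC size_scale_leq.
by rewrite mulr_sumr; apply: eq_bigr => i _; rewrite coefCM mulrA.
Qed.

Lemma hmulMX p h f j : hmul (p * 'X) h f j = hmul p h f (j - h).
Proof.
rewrite (@hmul_widen (size p).+1); last first.
  by have [->|p_neq0] := eqVneq p 0; rewrite ?mul0r ?size_poly0 // size_mulX.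
rewrite big_ord_recl coefMX /= mul0r add0r; apply: eq_bigr => i _.
rewrite coefMX /bump leq0n /= add1n; congr (_ * f _).
by rewrite -addn1 natrD mulrDl mul1r opprD addrA addrAC.
Qed.

Lemma hmulMXn n p h f j : hmul (p * 'X^n) h f j = hmul p h f (j - n%:R * h).
Proof.
elim: n j => [|n IHn] j; first by rewrite expr0 mulr1 mul0r subr0.
by rewrite exprSr mulrA hmulMX IHn -addn1 natrD mulrDl mul1r opprD addrA addrAC.
Qed.

Lemma hmulM p q h f j : hmul (p * q) h f j = hmul p h (hmul q h f) j.
Proof.
elim/poly_ind: p j => [|p c IHp] j; first by rewrite mul0r !hmul0.
by rewrite mulrDl mulrAC hmulD hmulMX IHp hmulCM hmulD hmulMX hmulC.
Qed.

Lemma hmulA p q h f j : hmul p h (hmul q h f) j = hmul q h (hmul p h f) j.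
Proof. by rewrite -!hmulM mulrC. Qed.

Lemma hmul_comp n p h f j : (0 < n)%N ->
  hmul (p \Po 'X^n) h f j = hmul p (n%:R * h) f j.
Proof.
move=> n_gt0; elim/poly_ind: p j => [|p c IHp] j; first by rewrite comp_poly0 !hmul0.
by rewrite comp_poly_MXaddC hmulD hmulMXn IHp hmulC hmulD hmulMX hmulC.
Qed.

Lemma hmulDr p h f g j :
  hmul p h (fun x => f x + g x) j = hmul p h f j + hmul p h g j.
Proof. by rewrite /hmul -big_split; apply: eq_bigr => i _; rewrite mulrDr. Qed.

Lemma hmul_sumr (I : finType) p h (G : I -> R -> K) j :
  hmul p h (fun x => \sum_i G i x) j = \sum_i hmul p h (G i) j.
Proof. by rewrite /hmul exchange_big; apply: eq_bigr => i _; rewrite mulr_sumr. Qed.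

Lemma hahn_polymulE p f j : hahn_polymul p f j = hmul p 1 f j.
Proof. by apply: eq_bigr => k _; rewrite mulr1. Qed.

End StepMultiplication.

Section Span.
Variables (R : realType) (K : fieldType) (h : R) (I : finType) (b : I -> R -> K).
Implicit Types (w : R -> K) (c : {poly K}).

(* [w] lies in the [K(x^h)]-span of the [b i]. *)
Definition in_span w : Prop :=
  exists (d : {poly K}) (C : I -> {poly K}),
    d != 0 /\ forall j, hmul d h w j = \sum_i hmul (C i) h (b i) j.

Lemma eq_in_span w w' : w =1 w' -> in_span w -> in_span w'.
Proof.
move=> eq_w [d [C [d_neq0 HC]]]; exists d, C; split => // j.
by rewrite -HC; apply: eq_hmul.
Qed.

Lemma in_span_gen i : in_span (b i).
Proof.
exists 1, (fun i' => (i' == i)%:R%:P); split => [|j]; first exact: oner_neq0.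
rewrite (bigD1 i) //= hmulC eqxx mul1r hmul1 big1 ?addr0 // => i' /negPf ->.
by rewrite hmulC mul0r.
Qed.

Lemma in_span0 : in_span (fun _ => 0).
Proof.
exists 1, (fun _ => 0); split => [|j]; first exact: oner_neq0.
by rewrite hmul1 big1 // => i _; rewrite hmul0.
Qed.

Lemma in_spanD w1 w2 : in_span w1 -> in_span w2 -> in_span (fun x => w1 x + w2 x).
Proof.
move=> [d1 [C1 [d1_neq0 HC1]]] [d2 [C2 [d2_neq0 HC2]]].
exists (d1 * d2), (fun i => d2 * C1 i + d1 * C2 i); split => [|j].
  by rewrite mulf_neq0.
rewrite hmulDr {1}mulrC !hmulM (eq_hmul _ _ HC2) (eq_hmul _ _ HC1).
rewrite !hmul_sumr -big_split; apply: eq_bigr => i _.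
by rewrite hmulD !hmulM.
Qed.

Lemma in_span_sum (J : Type) (r : seq J) (W : J -> R -> K) :
  (forall k, in_span (W k)) -> in_span (fun x => \sum_(k <- r) W k x).
Proof.
move=> HW; elim: r => [|k r IHr].
  by apply: eq_in_span in_span0 => x; rewrite big_nil.
by apply: eq_in_span (in_spanD (HW k) IHr) => x; rewrite big_cons.
Qed.

Lemma in_span_hmul c w : in_span w -> in_span (hmul c h w).
Proof.
move=> [d [C [d_neq0 HC]]]; exists d, (fun i => c * C i); split => // j.
rewrite hmulA (eq_hmul _ _ HC) hmul_sumr; apply: eq_bigr => i _.
by rewrite hmulM.
Qed.

Lemma in_spanN w : in_span w -> in_span (fun x => - w x).
Proof.
by move=> Hw; apply: eq_in_span (in_span_hmul (-1)%:P Hw) => x; rewrite hmulC mulN1r.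
Qed.

Lemma in_span_hmulV c w : c != 0 -> in_span (hmul c h w) -> in_span w.
Proof.
move=> c_neq0 [d [C [d_neq0 HC]]]; exists (d * c), C; split => [|j].
  by rewrite mulf_neq0.
by rewrite hmulM HC.
Qed.

(* Clear denominators and take a nonzero left kernel vector of the square matrix of
   coefficients, padded with zero columns. *)
Lemma in_span_dependent n (v : 'I_n -> R -> K) : (#|I| < n)%N ->
  (forall k, in_span (v k)) ->
  exists c : 'I_n -> {poly K}, (exists k, c k != 0) /\
    forall j, \sum_k hmul (c k) h (v k) j = 0.
Proof.
move=> lt_I_n /choice[d /choice[C HC]].
pose M : 'M[{poly K}]_n := \matrix_(k, l)
  oapp (fun l' : 'I_#|I| => C k (enum_val l')) 0 (insub (val l)).
have /det0P[u u_neq0 uM] : \det M == 0.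
  apply/eqP; rewrite (expand_det_col _ (Ordinal lt_I_n)) big1 // => k _.
  by rewrite mxE insubF ?ltnn // mul0r.
exists (fun k => u 0 k * d k); split.
  have [k Hk|u0] := pickP (fun k => u 0 k != 0).
    by exists k; rewrite mulf_neq0 // (HC k).1.
  case/eqP: u_neq0; apply/rowP => k; rewrite mxE.
  by move: (u0 k) => /negbFE/eqP.
move=> j.
under eq_bigr => k _ do rewrite hmulM (eq_hmul _ _ (HC k).2) hmul_sumr.
rewrite exchange_big big1 // => i _.
under eq_bigr => k _ do rewrite -hmulM.
rewrite -hmul_sum.
have -> : \sum_(k < n) u 0 k * C k i = 0.
  pose col := widen_ord (ltnW lt_I_n) (enum_rank i).
  have := congr1 (fun A : 'M[{poly K}]_(1, n) => A 0 col) uM.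
  rewrite /= !mxE => uMi; rewrite -[RHS]uMi; apply: eq_bigr => k _.
  by rewrite mxE /= (valK (enum_rank i)) /= enum_rankK.
exact: hmul0.
Qed.

End Span.

Section MahlerSpan.
Variables (R : realType) (K : fieldType) (h : R).

Lemma multiple_gt0 g (N : nat) : g = N%:R * h -> 0 < g -> (0 < N)%N.
Proof. by case: N => // ->; rewrite mul0r ltxx. Qed.

Lemma mahler_eq_hmul (P : nat -> {poly K}) d c (F : R -> K) g (N : nat) :
  mahler_eq P d c F -> g = N%:R * h -> 0 < g -> forall j,
  \sum_(i < d.+1) hmul (P i \Po 'X^N) h (hahn_subst F (g * c ^+ i)) j = 0.
Proof.
move=> HF gE g_gt0 j.
have N_gt0 := multiple_gt0 gE g_gt0.
rewrite -[RHS](HF (j / g)); apply: eq_bigr => i _.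
rewrite hmul_comp // -gE hahn_polymulE; apply: eq_bigr => k _.
by rewrite /hahn_subst mulr1 invfM mulrA mulrBl mulfK ?gt_eqF.
Qed.

Lemma mahler_in_span (I : finType) (b : I -> R -> K) (P : nat -> {poly K}) d c
    (F : R -> K) g (N : nat) :
  mahler_eq P d c F -> P d != 0 -> g = N%:R * h -> 0 < g ->
  (forall i, (i < d)%N -> in_span h b (hahn_subst F (g * c ^+ i))) ->
  in_span h b (hahn_subst F (g * c ^+ d)).
Proof.
move=> HF Pd_neq0 gE g_gt0 Hspan.
have N_gt0 := multiple_gt0 gE g_gt0.
apply: (@in_span_hmulV _ _ _ _ _ (P d \Po 'X^N)).
  by rewrite comp_poly_eq0 ?size_polyXn ?ltnS.
pose W i := hmul (P i \Po 'X^N) h (hahn_subst F (g * c ^+ i)).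
apply: (@eq_in_span _ _ _ _ _ (fun x => - \sum_(i < d) W i x)).
  move=> x; apply/eqP; rewrite eq_sym -addr_eq0 addrC.
  by rewrite -(big_ord_recr d (fun i => W i x)) (mahler_eq_hmul HF gE g_gt0).
apply/in_spanN/in_span_sum => i; apply: in_span_hmul; exact: Hspan.
Qed.

(* By induction on [a + b], each of the two Mahler equations lowering [a] below [d1]
   and [b] below [d2] respectively. *)
Lemma hahn_subst_in_span (P Q : nat -> {poly K}) d1 d2 (al be : R) (F : R -> K) A B :
  0 < al -> 0 < be -> P d1 != 0 -> Q d2 != 0 ->
  mahler_eq P d1 al F -> mahler_eq Q d2 be F ->
  (forall a b, (a <= A)%N -> (b <= B)%N ->
     exists N : nat, al ^+ a * be ^+ b = N%:R * h) ->
  forall a b, (a <= A)%N -> (b <= B)%N ->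
  in_span h (fun ab : 'I_d1 * 'I_d2 => hahn_subst F (al ^+ ab.1 * be ^+ ab.2))
    (hahn_subst F (al ^+ a * be ^+ b)).
Proof.
move=> al_gt0 be_gt0 Pd_neq0 Qd_neq0 HP HQ lattice a b.
have [n] := ubnP (a + b); elim: n a b => // n IHn a b ab_lt a_le b_le.
have g_gt0 a' b' : 0 < al ^+ a' * be ^+ b' by rewrite mulr_gt0 ?exprn_gt0.
have [le_d1_a|lt_a_d1] := leqP d1 a.
  have a'_le : (a - d1 <= A)%N by rewrite (leq_trans (leq_subr _ _)).
  have [N gE] := lattice _ _ a'_le b_le.
  have -> : al ^+ a * be ^+ b = al ^+ (a - d1) * be ^+ b * al ^+ d1.
    by rewrite mulrAC -exprD subnK.
  apply: (mahler_in_span HP Pd_neq0 gE (g_gt0 _ _)) => i lt_i_d1.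
  rewrite mulrAC -exprD; apply: IHn => //; lia.
have [le_d2_b|lt_b_d2] := leqP d2 b.
  have b'_le : (b - d2 <= B)%N by rewrite (leq_trans (leq_subr _ _)).
  have [N gE] := lattice _ _ a_le b'_le.
  have -> : al ^+ a * be ^+ b = al ^+ a * be ^+ (b - d2) * be ^+ d2.
    by rewrite -mulrA -exprD subnK.
  apply: (mahler_in_span HQ Qd_neq0 gE (g_gt0 _ _)) => i lt_i_d2.
  rewrite -mulrA -exprD; apply: IHn => //; lia.
exact: (in_span_gen h _ (Ordinal lt_a_d1, Ordinal lt_b_d2)).
Qed.

End MahlerSpan.

Section LaurentFractions.
Implicit Types (g y : rat) (E : nat).

Lemma natr_absz_denq g : (`|denq g|%N)%:R = (denq g)%:~R :> rat.
Proof. by rewrite -[in RHS]absz_denq. Qed.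

Lemma natr_absz_numq g : 0 < g -> (`|numq g|%N)%:R = (numq g)%:~R :> rat.
Proof.
move=> g_gt0; have num_ge0 : 0 <= numq g by rewrite numq_ge0 ltW.
by rewrite -[in RHS](gez0_abs num_ge0).
Qed.

Lemma ratE g : 0 < g -> g = (`|numq g|%N)%:R / (`|denq g|%N)%:R.
Proof. by move=> g_gt0; rewrite natr_absz_numq // natr_absz_denq divq_num_den. Qed.

Lemma numq_div_int g : g != 0 -> (numq g)%:~R / g \is a Num.int.
Proof. by move=> g_neq0; rewrite numqE mulrAC divff // mul1r rpred_int. Qed.

Lemma numq_mul_div_int (D : nat) (m : int) g : 0 < g -> (0 < D)%N ->
  ((D * `|numq g|)%N)%:R * (m%:~R / (D%:R * g)) \is a Num.int.
Proof.
move=> g_gt0 D_gt0; have D_neq0 : (D%:R : rat) != 0 by rewrite pnatr_eq0 -lt0n.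
have -> : ((D * `|numq g|)%N)%:R * (m%:~R / (D%:R * g)) = m%:~R * ((numq g)%:~R / g).
  by rewrite natrM natr_absz_numq //; field; rewrite D_neq0 gt_eqF.
by rewrite rpredM ?rpred_int ?numq_div_int ?gt_eqF.
Qed.

Definition numden g : nat := (`|numq g| * `|denq g|)%N.

Lemma numden_gt0 g : 0 < g -> (0 < numden g)%N.
Proof. by move=> g_gt0; rewrite muln_gt0 !absz_gt0 denq_neq0 numq_eq0 gt_eqF. Qed.

Lemma numden_mul_int g : 0 < g -> (numden g)%:R * g \is a Num.int.
Proof.
move=> g_gt0; rewrite natrM -mulrA [_ * g]mulrC natr_absz_denq -numqE.
by rewrite rpredM ?rpred_int ?rpred_nat.
Qed.

Lemma numden_mulV_int g : 0 < g -> (numden g)%:R * g^-1 \is a Num.int.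
Proof.
move=> g_gt0; have -> : (numden g)%:R * g^-1 = (denq g)%:~R * (`|denq g|%N)%:R.
  by rewrite natrM natr_absz_numq // numqE; field; rewrite gt_eqF.
by rewrite rpredM ?rpred_int ?rpred_nat.
Qed.

(* [y] lies in [E^-1 Z[g, g^-1]]; for [g > 0], [Z[g, g^-1] = Z[1 / numden g]]. *)
Definition laurent_frac E g y : Prop :=
  exists e : nat, ((E * numden g ^ e)%N)%:R * y \is a Num.int.

Lemma laurent_frac_int E g y : E%:R * y \is a Num.int -> laurent_frac E g y.
Proof. by exists 0%N; rewrite expn0 muln1. Qed.

Lemma laurent_frac_dvd E E' g y : (E %| E')%N -> laurent_frac E g y -> laurent_frac E' g y.
Proof.
move=> /dvdnP[k ->] [e He]; exists e.
by rewrite -mulnA natrM -mulrA rpredM // rpred_nat.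
Qed.

Lemma laurent_fracD E g y1 y2 :
  laurent_frac E g y1 -> laurent_frac E g y2 -> laurent_frac E g (y1 + y2).
Proof.
move=> [e1 H1] [e2 H2]; exists (e1 + e2)%N; rewrite mulrDr expnD; apply: rpredD.
  by rewrite mulnA natrM mulrAC rpredM // rpred_nat.
by rewrite mulnCA mulnC natrM mulrAC rpredM // rpred_nat.
Qed.

Lemma laurent_fracN E g y : laurent_frac E g y -> laurent_frac E g (- y).
Proof. by move=> [e He]; exists e; rewrite mulrN rpredN. Qed.

Lemma laurent_fracM E g y z : 0 < g -> laurent_frac E g y -> laurent_frac E g (g ^ z * y).
Proof.
move=> g_gt0 Hy.
have step g' y' : (numden g)%:R * g' \is a Num.int ->
    laurent_frac E g y' -> laurent_frac E g (g' * y').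
  move=> g'_int [e He]; exists e.+1.
  by rewrite expnSr mulnA natrM [g' * y']mulrC mulrACA rpredM.
case: z => n; last rewrite NegzE -exprnN -exprVn.
  elim: n => [|n IHn]; first by rewrite expr0z mul1r.
  by rewrite exprSz -mulrA; apply/step/IHn/numden_mul_int.
elim: n.+1 => [|m IHm]; first by rewrite expr0 mul1r.
by rewrite exprS -mulrA; apply/step/IHm/numden_mulV_int.
Qed.

End LaurentFractions.

Section LaurentEquivalence.
Variables (R : realType) (E : nat) (g : rat).
Hypothesis g_gt0 : 0 < g.

Definition laurent_equiv (s t : R) : Prop :=
  exists (z : int) (y : rat), laurent_frac E g y /\ s = ratr (g ^ z) * t + ratr y.

Lemma laurent_equiv_refl s : laurent_equiv s s.
Proof.
exists 0, 0; split; last by rewrite expr0z rmorph1 rmorph0 mul1r addr0.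
by apply: laurent_frac_int; rewrite mulr0 rpred0.
Qed.

Lemma laurent_equiv_sym s t : laurent_equiv s t -> laurent_equiv t s.
Proof.
move=> [z [y [Hy ->]]]; exists (- z), (- (g ^ (- z) * y)); split.
  exact/laurent_fracN/laurent_fracM.
have gzK : g ^ (- z) * g ^ z = 1 by rewrite -invr_expz mulVf // expfz_neq0 ?gt_eqF.
by rewrite mulrDr mulrA -rmorphM gzK rmorph1 mul1r rmorphN rmorphM addrK.
Qed.

Lemma laurent_equiv_trans s t u :
  laurent_equiv s t -> laurent_equiv t u -> laurent_equiv s u.
Proof.
move=> [z1 [y1 [H1 ->]]] [z2 [y2 [H2 ->]]].
exists (z1 + z2), (g ^ z1 * y2 + y1); split; first exact/laurent_fracD/H1/laurent_fracM.
by rewrite expfzDr ?gt_eqF // !rmorphD !rmorphM mulrDr mulrA addrA.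
Qed.

End LaurentEquivalence.

(* Two arguments [(j - e/D) / (B g^k)] met in the coefficient at [j] of
   [\sum_k c_k(x^(1/D)) F(x^(B g^k))] are equivalent. *)
Lemma laurent_equiv_shift (R : realType) (g B : rat) (D : nat) (j : R) (k1 k2 e1 e2 : nat) :
  0 < g -> 0 < B -> (0 < D)%N ->
  laurent_equiv (D * `|numq B|)%N g ((j - e1%:R * D%:R^-1) / ratr (B * g ^+ k1))
                                   ((j - e2%:R * D%:R^-1) / ratr (B * g ^+ k2)).
Proof.
move=> g_gt0 B_gt0 D_gt0.
have D_neq0 : (D%:R : rat) != 0 by rewrite pnatr_eq0 -lt0n.
have gk_neq0 k : g ^+ k != 0 by rewrite expf_neq0 // gt_eqF.
pose y := (e2%:R - e1%:R) / D%:R / (B * g ^+ k1).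
exists (k2%:Z - k1%:Z), y; split.
  have -> : y = g ^ (- k1%:Z) * ((e2%:Z - e1%:Z)%:~R / (D%:R * B)).
    by rewrite /y -exprnN intrB; field; rewrite D_neq0 gk_neq0 gt_eqF.
  by apply/laurent_fracM/laurent_frac_int/numq_mul_div_int.
have gz : g ^ (k2%:Z - k1%:Z) / (B * g ^+ k2) = (B * g ^+ k1)^-1.
  rewrite expfzDr ?gt_eqF // -invr_expz -!exprnP.
  by field; rewrite !gk_neq0 gt_eqF.
have {}gz : ratr (g ^ (k2%:Z - k1%:Z)) / ratr (B * g ^+ k2) = (ratr (B * g ^+ k1))^-1 :> R.
  by rewrite -fmorphV -rmorphM gz fmorphV.
rewrite /y !fmorph_div rmorphB !rmorph_nat mulrCA gz; ring.
Qed.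

Section SupportLaurent.
Variables (R : realType) (K : fieldType).

Lemma sum_hmul_pairs n M (c : 'I_n -> {poly K}) h (f : 'I_n -> R -> K) j :
  (forall k, size (c k) <= M)%N ->
  \sum_(k < n) hmul (c k) h (f k) j =
  \sum_(p : 'I_n * 'I_M) (c p.1)`_p.2 * f p.1 (j - p.2%:R * h).
Proof.
move=> size_c; rewrite -(pair_big xpredT xpredT (fun k (e : 'I_M) =>
  (c k)`_e * f k (j - e%:R * h))) /=.
by apply: eq_bigr => k _; rewrite (hmul_widen _ _ _ (size_c k)).
Qed.

Lemma exponent_le_of_support (F : R -> K) (g B : rat) (D : nat) s0 j (k1 k2 e1 e2 : nat) :
  0 < g -> 0 < B -> (0 < D)%N ->
  (forall t, F t != 0 -> laurent_equiv (D * `|numq B|) g t s0 -> s0 <= t) ->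
  j = ratr (B * g ^+ k2) * s0 + e2%:R * D%:R^-1 ->
  F ((j - e1%:R * D%:R^-1) / ratr (B * g ^+ k1)) != 0 ->
  ratr (B * g ^+ k1) * s0 + e1%:R * D%:R^-1 <= j.
Proof.
move=> g_gt0 B_gt0 D_gt0 s0_min jE Ft.
have G_gt0 k : (0 : R) < ratr (B * g ^+ k) by rewrite ltr0q mulr_gt0 ?exprn_gt0.
have s0E : s0 = (j - e2%:R * D%:R^-1) / ratr (B * g ^+ k2).
  by rewrite jE addrK mulrC mulKf ?gt_eqF.
set t := (j - _) / _ in Ft *.
have -> : j = ratr (B * g ^+ k1) * t + e1%:R * D%:R^-1.
  by rewrite mulrC divfK ?gt_eqF // subrK.
rewrite lerD2r ler_pM2l // s0_min // [X in laurent_equiv _ _ _ X]s0E.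
exact: laurent_equiv_shift.
Qed.

(* Look at the lowest exponent [G_k s0 + e/D] produced by [s0] in the relation: every
   term contributing to that coefficient comes from [s0] itself, by minimality of [s0]
   in its class, so at least two of them, with different [k], must cancel. *)
Lemma lowest_term_cancel (F : R -> K) (g B : rat) (D n : nat) (c : 'I_n -> {poly K}) s0 :
  0 < g -> 0 < B -> (0 < D)%N ->
  (forall j, \sum_(k < n) hmul (c k) D%:R^-1 (hahn_subst F (ratr (B * g ^+ k))) j = 0) ->
  (exists k, c k != 0) -> F s0 != 0 ->
  (forall t, F t != 0 -> laurent_equiv (D * `|numq B|) g t s0 -> s0 <= t) ->
  exists k1 k2 : 'I_n, k1 != k2 /\ exists e1 e2 : nat,
    s0 * (ratr (B * g ^+ k1) - ratr (B * g ^+ k2)) = (e2%:R - e1%:R) * D%:R^-1.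
Proof.
move=> g_gt0 B_gt0 D_gt0 Hrel [k0 ck0_neq0] Fs0 s0_min.
set h : R := D%:R^-1; pose G k : R := ratr (B * g ^+ k).
have G_gt0 k : 0 < G k by rewrite ltr0q mulr_gt0 ?exprn_gt0.
have h_neq0 : h != 0 by rewrite invr_eq0 pnatr_eq0 -lt0n.
pose M := (\max_(k < n) size (c k)).+1.
have size_c k : (size (c k) <= M)%N.
  by rewrite ltnW // ltnS (leq_bigmax (F := fun k => size (c k))).
pose nz (p : 'I_n * 'I_M) := (c p.1)`_p.2 != 0.
pose phi (p : 'I_n * 'I_M) : R := G p.1 * s0 + p.2%:R * h.
have lt_lead_M : ((size (c k0)).-1 < M)%N.
  by rewrite ltnS (leq_trans (leq_pred _)) // (leq_bigmax (F := fun k => size (c k))).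
have nz_lead : nz (k0, Ordinal lt_lead_M) by rewrite /nz -lead_coefE lead_coef_eq0.
case: (arg_minP phi nz_lead) => pm nz_pm pm_min.
set j0 := phi pm.
have phiK (p : 'I_n * 'I_M) : (phi p - p.2%:R * h) / G p.1 = s0.
  by rewrite addrK mulrC mulKf ?gt_eqF.
have term (p : 'I_n * 'I_M) : (c p.1)`_p.2 * F ((j0 - p.2%:R * h) / G p.1) =
    if nz p && (phi p == j0) then (c p.1)`_p.2 * F s0 else 0.
  rewrite /nz; have [cp_eq0|nz_p] /= := eqVneq (c p.1)`_p.2 0.
    by rewrite cp_eq0 mul0r.
  have [<-|phi_neq] := eqVneq (phi p) j0; first by rewrite phiK.
  have [->|Ft] := eqVneq (F ((j0 - p.2%:R * h) / G p.1)) 0; first by rewrite mulr0.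
  case/eqP: phi_neq; apply/eqP; rewrite eq_le pm_min // andbT.
  exact: exponent_le_of_support s0_min erefl Ft.
have := Hrel j0; rewrite (sum_hmul_pairs _ _ _ size_c).
rewrite (eq_bigr _ (fun p _ => term p)) -big_mkcond -mulr_suml => /eqP.
rewrite mulf_eq0 (negbTE Fs0) orbF (bigD1 pm) ?nz_pm ?eqxx //=.
have [p /andP[/andP[nz_p /eqP phi_p] p_neq]|none] :=
  pickP (fun p => nz p && (phi p == j0) && (p != pm)); last first.
  rewrite big1 ?addr0 => [/eqP c_eq0|p Pp]; first by move: nz_pm; rewrite /nz c_eq0 eqxx.
  by move: (none p); rewrite /= Pp.
move=> _; exists p.1, pm.1.
have k_neq : p.1 != pm.1.
  apply: contra_neq p_neq => k_eq; move: phi_p; rewrite /j0 /phi k_eq.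
  move=> /addrI/(mulIf h_neq0)/eqP; rewrite eqr_nat => /eqP e_eq.
  by rewrite [p]surjective_pairing [pm]surjective_pairing k_eq; congr pair; apply: val_inj.
split=> //; exists p.2, pm.2; apply/eqP; rewrite -subr_eq0 -[X in _ == X](subrr j0).
by rewrite -{1}phi_p /j0 /phi /G; apply/eqP; ring.
Qed.

End SupportLaurent.

(* The class of [s] has a least element [s0] in the well-ordered support; the
   cancellation at [s0] makes it rational with denominator dividing
   [D * B * (g^k1 - g^k2)], and [s] differs from [s0] by an element of [Z[g, g^-1]]. *)
Lemma support_laurent_frac (R : realType) (K : fieldType) (F : R -> K) (g B : rat) (D n : nat)
    (c : 'I_n -> {poly K}) :
  is_hahn F -> 0 < g -> g != 1 -> 0 < B -> (0 < D)%N -> (exists k, c k != 0) ->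
  (forall j, \sum_(k < n) hmul (c k) D%:R^-1 (hahn_subst F (ratr (B * g ^+ k))) j = 0) ->
  exists2 E : nat, (0 < E)%N &
    forall s, F s != 0 -> exists r : rat, s = ratr r /\ laurent_frac E g r.
Proof.
move=> F_wo g_gt0 g_neq1 B_gt0 D_gt0 c_neq0 Hrel.
set E0 := (D * `|numq B|)%N.
have gB_neq k1 k2 : k1 != k2 -> g ^+ k1 - g ^+ k2 != 0.
  by rewrite subr_eq0 (inj_eq (ieexprIn g_gt0 g_neq1)).
pose Nd : int := \prod_(p : 'I_n * 'I_n | p.1 != p.2) numq (g ^+ p.1 - g ^+ p.2).
have Nd_neq0 : Nd != 0 by apply/prodf_neq0 => p Hp; rewrite numq_eq0 gB_neq.
exists (E0 * `|Nd|)%N.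
  by rewrite !muln_gt0 D_gt0 !absz_gt0 Nd_neq0 numq_eq0 gt_eqF.
move=> s Fs.
have [s0 [Fs0 s0s] s0_min] : exists2 s0, F s0 != 0 /\ laurent_equiv E0 g s0 s &
    forall t, F t != 0 /\ laurent_equiv E0 g t s -> s0 <= t.
  apply: F_wo; first by move=> t [].
  by exists s; split=> //; apply: laurent_equiv_refl.
have [k1 [k2 [k_neq [e1 [e2 s0E]]]]] := lowest_term_cancel g_gt0 B_gt0 D_gt0 Hrel c_neq0 Fs0
  (fun t Ft t_s0 => s0_min t (conj Ft (laurent_equiv_trans g_gt0 t_s0 s0s))).
have D_neq0 : (D%:R : rat) != 0 by rewrite pnatr_eq0 -lt0n.
pose r0 : rat := ((e2%:Z - e1%:Z)%:~R / (D%:R * B)) * (g ^+ k1 - g ^+ k2)^-1.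
have gk_neq : g ^+ k1 - g ^+ k2 != 0 by apply: gB_neq.
have Bgk_neq : B * g ^+ k1 - B * g ^+ k2 != 0 by rewrite -mulrBr mulf_neq0 // gt_eqF.
have {}s0E : s0 = ratr r0.
  have -> : r0 = (e2%:R - e1%:R) / D%:R / (B * g ^+ k1 - B * g ^+ k2).
    by rewrite /r0 intrB; field; rewrite ?Bgk_neq ?D_neq0 ?gk_neq ?gt_eqF.
  by rewrite !fmorph_div !rmorphB !rmorph_nat -s0E mulfK // -!rmorphB fmorph_eq0.
have r0_frac : laurent_frac (E0 * `|Nd|) g r0.
  apply: laurent_frac_int; rewrite natrM /r0 mulrACA.
  rewrite rpredM ?numq_mul_div_int // natr_absz normrEsign intrM -mulrA rpredM ?rpred_int //.
  rewrite /Nd (bigD1 (k1, k2)) //= rmorphM mulrAC rpredM ?rpred_int //.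
  exact: numq_div_int.
have [z [y [y_frac sE]]] := laurent_equiv_sym g_gt0 s0s.
exists (g ^ z * r0 + y); split; first by rewrite sE s0E -rmorphM -rmorphD.
apply: laurent_fracD; first exact: laurent_fracM.
exact: laurent_frac_dvd (dvdn_mulr _ _) y_frac.
Qed.

Lemma exprM_lattice (al be : rat) (A B a b : nat) : 0 < al -> 0 < be ->
  (a <= A)%N -> (b <= B)%N -> exists N : nat,
  al ^+ a * be ^+ b = N%:R / ((`|denq al| ^ A * `|denq be| ^ B)%N)%:R.
Proof.
move=> al_gt0 be_gt0 /subnK<- /subnK<-; set x := (A - a)%N; set y := (B - b)%N.
exists (`|numq al| ^ a * `|denq al| ^ x * (`|numq be| ^ b * `|denq be| ^ y))%N.
have den_neq0 (q : rat) : (`|denq q|%N%:R : rat) != 0.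
  by rewrite natr_absz_denq intr_eq0 denq_neq0.
rewrite {1}(ratE al_gt0) {1}(ratE be_gt0) !natrM !natrX !exprD !expr_div_n.
by field; rewrite !expf_neq0.
Qed.

Section MahlerRelation.
Variables (R : realType) (K : fieldType) (F : R -> K) (al be : rat).
Variables (P Q : nat -> {poly K}) (d1 d2 : nat).
Hypotheses (al_gt0 : 0 < al) (be_gt0 : 0 < be) (Pd1_neq0 : P d1 != 0) (Qd2_neq0 : Q d2 != 0).
Hypotheses (HP : mahler_eq P d1 (ratr al : R) F) (HQ : mahler_eq Q d2 (ratr be : R) F).

(* The [d1 * d2 + 1] series [F(x^(Bc g^k))], [k <= d1 * d2], all lie in the span of the
   [F(x^(al^a be^b))], [a < d1], [b < d2], hence are linearly dependent. *)
Lemma mahler_ratio_relation (np nn mp mn : nat) g :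
  g = al ^+ np * be ^+ mp / (al ^+ nn * be ^+ mn) ->
  exists (D : nat) (Bc : rat) (n : nat) (c : 'I_n -> {poly K}),
  [/\ (0 < D)%N, 0 < Bc, exists k, c k != 0 &
      forall j, \sum_(k < n) hmul (c k) D%:R^-1 (hahn_subst F (ratr (Bc * g ^+ k))) j = 0].
Proof.
move=> gE; set r := #|{: 'I_d1 * 'I_d2}|.
pose ak k := (np * k + nn * (r - k))%N; pose bk k := (mp * k + mn * (r - k))%N.
set A := ((np + nn) * r + d1)%N; set B := ((mp + mn) * r + d2)%N.
set D := (`|denq al| ^ A * `|denq be| ^ B)%N.
have D_gt0 : (0 < D)%N by rewrite muln_gt0 !expn_gt0 !absz_gt0 !denq_neq0.
pose Bc := al ^+ (nn * r) * be ^+ (mn * r).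
have Bc_gt0 : 0 < Bc by rewrite mulr_gt0 ?exprn_gt0.
have akbkE k : (k <= r)%N -> al ^+ ak k * be ^+ bk k = Bc * g ^+ k.
  move=> le_k_r; rewrite /ak /bk /Bc gE -(subnKC le_k_r) addKn !mulnDr !exprD !exprM.
  by rewrite expr_div_n !exprMn; field; rewrite !expf_neq0 ?gt_eqF.
have lattice a b : (a <= A)%N -> (b <= B)%N ->
    exists N : nat, (ratr al : R) ^+ a * ratr be ^+ b = N%:R * D%:R^-1.
  move=> le_aA le_bB; have [N NE] := exprM_lattice al_gt0 be_gt0 le_aA le_bB.
  by exists N; rewrite -!rmorphXn -rmorphM NE fmorph_div !rmorph_nat.
have in_span_k (k : 'I_r.+1) : in_span D%:R^-1
    (fun ab : 'I_d1 * 'I_d2 => hahn_subst F ((ratr al : R) ^+ ab.1 * ratr be ^+ ab.2))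
    (hahn_subst F (ratr (Bc * g ^+ k))).
  have le_k_r : (k <= r)%N by rewrite -ltnS.
  have mix_le x y d : (x * k + y * (r - k) <= (x + y) * r + d)%N by nia.
  rewrite -akbkE // [ratr (_ * _)]rmorphM !rmorphXn.
  by apply: (hahn_subst_in_span _ _ Pd1_neq0 Qd2_neq0 HP HQ lattice); rewrite ?ltr0q ?mix_le.
have [c [c_neq0 Hc]] := in_span_dependent (ltnSn r) in_span_k.
by exists D, Bc, r.+1, c.
Qed.

Lemma mahler_support_laurent_frac (np nn mp mn : nat) g :
  is_hahn F -> g = al ^+ np * be ^+ mp / (al ^+ nn * be ^+ mn) -> g != 1 ->
  exists2 E : nat, (0 < E)%N &
    forall s, F s != 0 -> exists r : rat, s = ratr r /\ laurent_frac E g r.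
Proof.
move=> F_wo gE g_neq1.
have g_gt0 : 0 < g by rewrite gE divr_gt0 ?mulr_gt0 ?exprn_gt0.
have [D [Bc [n [c [D_gt0 Bc_gt0 c_neq0 Hc]]]]] := mahler_ratio_relation gE.
exact: support_laurent_frac F_wo g_gt0 g_neq1 Bc_gt0 D_gt0 c_neq0 Hc.
Qed.

End MahlerRelation.

Lemma mult_indep_expr_neq1 (R : realType) (al be : rat) (n1 n2 m1 m2 : nat) :
  0 < al -> 0 < be -> mult_indep (ratr al : R) (ratr be) -> (n1 != n2) || (m1 != m2) ->
  al ^+ n1 * be ^+ m1 / (al ^+ n2 * be ^+ m2) != 1.
Proof.
move=> al_gt0 be_gt0 indep nm_neq; apply: contraPneq indep => g_eq1; apply.
have den_neq0 : al ^+ n2 * be ^+ m2 != 0 by rewrite mulf_neq0 ?expf_neq0 ?gt_eqF.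
set a : R := ratr al; set b : R := ratr be.
have [a_gt0 b_gt0] : 0 < a /\ 0 < b by rewrite /a /b !ltr0q.
have expE : a ^+ n1 * b ^+ m1 = a ^+ n2 * b ^+ m2.
  by rewrite /a /b -!rmorphXn -!rmorphM -[al ^+ n1 * _](divfK den_neq0) g_eq1 mul1r.
clearbody a b; move/(congr1 (@ln R)): expE.
rewrite !lnM ?posrE ?exprn_gt0 //; rewrite !lnXn // => lnE.
have {}lnE : ln a * (n1%:R - n2%:R) = ln b * (m2%:R - m1%:R).
  apply/eqP; rewrite -subr_eq0 -(subrr (ln a *+ n2 + ln b *+ m2)) -{1}lnE.
  by apply/eqP; ring.
have [lnb_eq0|lnb_neq0] := eqVneq (ln b) 0.
  by exists 0; rewrite lnb_eq0 invr0 mulr0 rmorph0.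
have [n_eq|n_neq] := eqVneq n1 n2.
  move: nm_neq lnE; rewrite n_eq eqxx subrr mulr0 /= => m_neq /esym/eqP.
  by rewrite mulf_eq0 (negbTE lnb_neq0) subr_eq0 eqr_nat eq_sym (negbTE m_neq).
exists ((m2%:Z - m1%:Z)%:~R / (n1%:Z - n2%:Z)%:~R).
have n_neq0 : (n1%:R - n2%:R : R) != 0 by rewrite subr_eq0 eqr_nat.
rewrite fmorph_div !rmorph_int !intrB /=.
by apply/eqP; rewrite eqr_div // [X in _ == X]mulrC; apply/eqP; exact: lnE.
Qed.

Lemma denq_dvd (x : rat) (M : nat) : M%:R * x \is a Num.int -> (`|denq x| %| M)%N.
Proof.
move=> Mx_int.
have numE : (numq (M%:R * x) * denq x = M%:Z * numq x)%R.
  by apply: (@intr_inj rat); rewrite !intrM (numqK Mx_int) numqE mulrA.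
have coprime_dn : coprime `|denq x| `|numq x| by rewrite coprime_sym coprime_num_den.
by rewrite -(Gauss_dvdr _ coprime_dn) mulnC -(abszM M%:Z) -numE abszM dvdn_mull.
Qed.

Lemma laurent_frac_prime_denq E E' g y q : (E %| E')%N -> laurent_frac E g y ->
  prime q -> (q %| `|denq (E'%:R * y)|)%N -> (q %| numden g)%N.
Proof.
move=> /dvdnP[k ->] [e He] q_prime q_dvd.
have : (`|denq ((k * E)%:R * y)| %| numden g ^ e)%N.
  apply: denq_dvd; have -> : (numden g ^ e)%:R * ((k * E)%:R * y) =
    k%:R * (((E * numden g ^ e)%N)%:R * y) by rewrite !natrM; ring.
  by rewrite rpredM ?rpred_nat.
by move/(dvdn_trans q_dvd); rewrite Euclid_dvdX // => /andP[].
Qed.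

Lemma coprime_prime_ndvd p m n : prime p -> coprime m n -> (p %| m)%N -> ~~ (p %| n)%N.
Proof.
by move=> p_prime mn_coprime p_dvd_m; rewrite -prime_coprime ?(coprime_dvdl p_dvd_m).
Qed.

Lemma numden_prime_ndvd (g : rat) (a b p : nat) : prime p -> (0 < a)%N -> (0 < b)%N ->
  g = a%:R / b%:R -> logn p a = logn p b -> ~~ (p %| numden g)%N.
Proof.
move=> p_prime a_gt0 b_gt0 gE ab_log.
have g_gt0 : 0 < g by rewrite gE divr_gt0 // ltr0n.
have numE : (`|numq g| * b = a * `|denq g|)%N.
  apply/eqP; rewrite -(eqr_nat rat) !natrM natr_absz_numq // natr_absz_denq.
  rewrite numqE gE; apply/eqP; field.
  by rewrite pnatr_eq0 -lt0n b_gt0.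
have num_gt0 : (0 < `|numq g|)%N by rewrite absz_gt0 numq_eq0 gt_eqF.
have den_gt0 : (0 < `|denq g|)%N by rewrite absz_gt0 denq_neq0.
have /eqP := congr1 (logn p) numE; rewrite !lognM // ab_log addnC eqn_add2l => /eqP nd_log.
have p_dvd_pos n : (0 < n)%N -> (p %| n)%N = (0 < logn p n)%N.
  by move=> n_gt0; rewrite logn_gt0 mem_primes p_prime n_gt0.
rewrite /numden Euclid_dvdM // negb_or !p_dvd_pos // nd_log andbb.
apply/negP => den_log_gt0.
have /(coprime_prime_ndvd p_prime (coprime_num_den g)) : (p %| `|numq g|)%N.
  by rewrite p_dvd_pos // nd_log.
by rewrite p_dvd_pos // den_log_gt0.
Qed.

(* With [x1, x2, y1, y2] the [p]-adic valuations of [num al, den al, num be, den be], the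
   ratio [al^y1 be^x2 / (al^y2 be^x1)] is a [p]-adic unit; [x1 != x2] since [p] divides
   exactly one of the coprime [num al] and [den al]. *)
Lemma prime_avoiding_ratio (al be : rat) (p : nat) : 0 < al -> 0 < be ->
  p \in primes (numden al) -> exists np nn mp mn : nat,
  ~~ (p %| numden (al ^+ np * be ^+ mp / (al ^+ nn * be ^+ mn)))%N /\ mp != mn.
Proof.
move=> al_gt0 be_gt0; rewrite mem_primes => /and3P[p_prime _ p_dvd].
set A1 := `|numq al|%N; set A2 := `|denq al|%N.
set B1 := `|numq be|%N; set B2 := `|denq be|%N.
have [A1_gt0 A2_gt0 B1_gt0 B2_gt0] : [/\ 0 < A1, 0 < A2, 0 < B1 & 0 < B2]%N.
  by rewrite !absz_gt0 !denq_neq0 !numq_eq0 !gt_eqF.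
set x1 := logn p A1; set x2 := logn p A2; set y1 := logn p B1; set y2 := logn p B2.
exists y1, y2, x2, x1; split.
  have pos := (muln_gt0, expn_gt0, A1_gt0, A2_gt0, B1_gt0, B2_gt0).
  apply: (@numden_prime_ndvd _ (A1 ^ y1 * B1 ^ x2 * A2 ^ y2 * B2 ^ x1)
                              (A2 ^ y1 * B2 ^ x2 * A1 ^ y2 * B1 ^ x1) p p_prime).
  - by rewrite !pos.
  - by rewrite !pos.
  - have nat_neq0 n : (0 < n)%N -> (n%:R : rat) != 0 by rewrite pnatr_eq0 -lt0n.
    rewrite {1 2}(ratE al_gt0) {1 2}(ratE be_gt0) -/A1 -/A2 -/B1 -/B2.
    rewrite !natrM !natrX !expr_div_n.
    by field; rewrite !expf_neq0 ?nat_neq0.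
  - by rewrite !lognM ?pos // !lognX -/x1 -/x2 -/y1 -/y2; ring.
have logn_gt0_dvd n : (0 < n)%N -> (p %| n)%N -> (0 < logn p n)%N.
  by move=> n_gt0 p_dvd_n; rewrite logn_gt0 mem_primes p_prime n_gt0.
have cop := coprime_num_den al; move: p_dvd; rewrite Euclid_dvdM // => /orP[p_A1|p_A2].
  rewrite /x1 /x2 logn_coprime ?prime_coprime ?(coprime_prime_ndvd p_prime cop p_A1) //.
  by rewrite eq_sym -lt0n logn_gt0_dvd.
rewrite coprime_sym in cop.
rewrite /x1 /x2 (logn_coprime (m := A1)) ?prime_coprime //.
  by rewrite -lt0n logn_gt0_dvd.
exact: coprime_prime_ndvd p_prime cop p_A2.
Qed.

Lemma int_in_Zlaurent (g x : rat) : x \is a Num.int -> in_Zlaurent g x.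
Proof. by move=> /intrP[z ->]; exists [:: (z, 0)]; rewrite big_seq1 expr0z mulr1. Qed.

Section ScaledSupport.
Variables (R : realType) (K : fieldType) (F : R -> K) (al be : rat).
Variables (P Q : nat -> {poly K}) (d1 d2 : nat).
Hypotheses (al_gt0 : 0 < al) (be_gt0 : 0 < be) (indep : mult_indep (ratr al : R) (ratr be)).
Hypotheses (F_wo : is_hahn F) (Pd1_neq0 : P d1 != 0) (Qd2_neq0 : Q d2 != 0).
Hypotheses (HP : mahler_eq P d1 (ratr al : R) F) (HQ : mahler_eq Q d2 (ratr be : R) F).

Let support_frac E g := forall s, F s != 0 -> exists r : rat, s = ratr r /\ laurent_frac E g r.

Let ratio_support_frac (np nn mp mn : nat) : (np != nn) || (mp != mn) ->
  exists2 E : nat, (0 < E)%N &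
    support_frac E (al ^+ np * be ^+ mp / (al ^+ nn * be ^+ mn)).
Proof.
move=> nm_neq; apply: (mahler_support_laurent_frac al_gt0 be_gt0 Pd1_neq0 Qd2_neq0 HP HQ
  F_wo erefl).
exact: (mult_indep_expr_neq1 al_gt0 be_gt0 indep nm_neq).
Qed.

(* The denominators allowed by [g = al] are products of primes dividing [numden al];
   each such prime [p] is excluded by a ratio [g] with [p] coprime to [numden g]. *)
Lemma support_scaled_int : exists2 l : nat, (0 < l)%N &
  forall s, F s != 0 -> exists r : rat, s = ratr r /\ l%:R * r \is a Num.int.
Proof.
have [E0 E0_gt0 al_frac] : exists2 E0 : nat, (0 < E0)%N & support_frac E0 al.
  by have := @ratio_support_frac 1 0 0 0 isT; rewrite expr1 !expr0 mulr1 mul1r divr1.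
have /choice[Ep Ep_spec] p : exists E : nat, (0 < E)%N /\ (p \in primes (numden al) ->
    exists g, ~~ (p %| numden g)%N /\ support_frac E g).
  have [p_in|_] := boolP (p \in primes (numden al)); last by exists 1%N.
  have [np [nn [mp [mn [p_ndvd m_neq]]]]] := prime_avoiding_ratio al_gt0 be_gt0 p_in.
  have [E E_gt0 HE] := @ratio_support_frac np nn mp mn (introT orP (or_intror m_neq)).
  by exists E; split=> // _; exists (al ^+ np * be ^+ mp / (al ^+ nn * be ^+ mn)).
pose l := (E0 * \prod_(p <- primes (numden al)) Ep p)%N.
exists l; first by rewrite muln_gt0 E0_gt0 prodn_gt0 // => p; case: (Ep_spec p).
move=> s Fs; have [r [sE r_frac]] := al_frac s Fs; exists r; split => //.
rewrite Qint_def -absz_denq; apply: contraT => D_neq1.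
set D := `|denq _|%N in D_neq1 *.
have D_gt1 : (1 < D)%N by rewrite ltn_neqAle eq_sym D_neq1 absz_gt0 denq_neq0.
have q_prime := pdiv_prime D_gt1; have q_dvd := pdiv_dvd D.
have q_in : pdiv D \in primes (numden al).
  rewrite mem_primes q_prime numden_gt0 //.
  by apply: (laurent_frac_prime_denq _ r_frac q_prime q_dvd); rewrite dvdn_mulr.
have [_ /(_ q_in)[g [q_ndvd g_frac]]] := Ep_spec (pdiv D).
have [r' [sE' r'_frac]] := g_frac s Fs.
have : (ratr r' : R) = ratr r by rewrite -sE -sE'.
move/(@fmorph_inj _ _ (@ratr R)) => r'E.
rewrite r'E in r'_frac; rewrite -(negbTE q_ndvd).
apply: (laurent_frac_prime_denq _ r'_frac q_prime q_dvd).
by rewrite /l (big_rem _ q_in) /= dvdn_mull // dvdn_mulr.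
Qed.

End ScaledSupport.

Unset Implicit Arguments.

Theorem mainTheorem13 (R : realType) (K : fieldExtType rat)
  (alpha beta : rat) (N : nat) (F : R -> K)
  (d1 d2 : nat) (P Q : nat -> {poly K}) :
  0 < alpha -> 0 < beta -> mult_indep (ratr alpha : R) (ratr beta) ->
  is_hahn F ->
  P d1 != 0 -> mahler_eq P d1 (ratr alpha : R) F ->
  Q d2 != 0 -> mahler_eq Q d2 (ratr beta : R) F ->
  exists l : nat, (0 < l)%N /\
    forall j : R, hahn_subst F (l%:R) j != 0 ->
      exists q : rat, j = ratr q /\
        forall n m : int, (`|n| <= N)%N -> (`|m| <= N)%N ->
          in_Zlaurent (alpha ^ n * beta ^ m) q.
Proof.
move=> al_gt0 be_gt0 indep F_wo Pd1_neq0 HP Qd2_neq0 HQ.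
have [l l_gt0 Hl] := support_scaled_int al_gt0 be_gt0 indep F_wo Pd1_neq0 Qd2_neq0 HP HQ.
exists l; split=> // j Fj; have [r [jE r_int]] := Hl _ Fj.
exists (l%:R * r); split; last by move=> n m _ _; apply: int_in_Zlaurent.
have -> : (ratr (l%:R * r) : R) = l%:R * ratr r by rewrite rmorphM rmorph_nat.
by rewrite -jE mulrC divfK // pnatr_eq0 -lt0n.
Qed.
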